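(* Let $\alpha\in(0,1)$. Assume the setting described in the context, and assume there exist $\varepsilon_{\mathrm{test}}\in(0,1)$, $\{\varepsilon_{\mathrm{test}}(i)\}_{i\in I_{\mathrm{test}}}\subset(0,1)$ and $\delta_{\mathrm{test}}\in(0,1)$ such that for every measurable $q:(\mathcal{X}\times\mathcal{Y})^{n_{\mathrm{train}}}\to\mathbb{R}$ and every $i\in I_{\mathrm{test}}$, \[\left|\mathbb{P}[\widehat{s}_{\mathrm{train}}(X_i,Y_i)\le q_{\mathrm{train}}]-\mathbb{E}[P_{q,\mathrm{train}}]\right|\le\varepsilon_{\mathrm{test}}(i),\] and moreover \[\mathbb{P}\left[\left|\frac{1}{n_{\mathrm{test}}}\sum_{i\in I_{\mathrm{test}}}\mathbf{1}\{\widehat{s}_{\mathrm{train}}(X_i,Y_i)\le q_{\mathrm{train}}\}-P_{q,\mathrm{train}}\right|\le\varepsilon_{\mathrm{test}}\right]\ge 1-\delta_{\mathrm{test}}.\] Then for all $i\in I_{\mathrm{test}}$, \[\mathbb{P}\left[\widehat{s}_{\mathrm{train}}(X_i,Y_i)\le\widehat{q}^{(i)}_{1-\alpha,\mathrm{cal}}\right]\ge 1-\alpha-\varepsilon_{\mathrm{test}}(i)-\varepsilon_{\mathrm{test}}-\delta_{\mathrm{test}}-\frac{1}{n_{\mathrm{test}}}.\] Moreover, \[\mathbb{P}\left[\frac{1}{n_{\mathrm{test}}}\sum_{i\in I_{\mathrm{test}}}\mathbf{1}\{\widehat{s}_{\mathrm{train}}(X_i,Y_i)\le\widehat{q}^{(i)}_{1-\alpha,\mathrm{cal}}\}\ge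 1-\alpha-\varepsilon_{\mathrm{test}}-\frac{1}{n_{\mathrm{test}}}\right]\ge 1-2\delta_{\mathrm{test}}.\]
   Context: (Rank-one-out conformal prediction.) Let $\mathcal{X},\mathcal{Y}$ be measurable spaces. The sample $(X_i,Y_i)_{i=1}^n$ consists of random pairs in $\mathcal{X}\times\mathcal{Y}$, and $(X_*,Y_* )$ is an additional random pair, independent of the sample, with $(X_i,Y_i)\sim(X_*,Y_* )$ for all $i$. Write $n=n_{\mathrm{train}}+n_{\mathrm{test}}$ with positive integers, $n_{\mathrm{test}}\ge2$, $I_{\mathrm{train}}=\{1,\dots,n_{\mathrm{train}}\}$, $I_{\mathrm{test}}=\{n_{\mathrm{train}}+1,\dots,n\}$. Let $s:(\mathcal{X}\times\mathcal{Y})^{n_{\mathrm{train}}+1}\to\mathbb{R}$ be any (measurable) function and $\widehat{s}_{\mathrm{train}}(x,y)=s((X_i,Y_i)_{i\in I_{\mathrm{train}}},(x,y))$. For $i\in I_{\mathrm{test}}$ and $\phi\in[0,1)$, $\widehat{q}^{(i)}_{\phi,\mathrm{cal}}=\inf\{t\in\mathbb{R}:\frac{1}{n_{\mathrm{test}}-1}\sum_{j\in I_{\mathrm{test}}\setminus\{i\}}\mathbf{1}\{\widehat{s}_{\mathrm{train}}(X_j,Y_j)\le t\}\ge\phi\}$. For measurable $q:(\mathcal{X}\times\mathcal{Y})^{n_{\mathrm{train}}}\to\mathbb{R}$, $q_{\mathrm{train}}=q((X_i,Y_i)_{i\in I_{\mathrm{train}}})$ and $P_{q,\mathrm{train}}=\mathbb{P}[\widehat{s}_{\mathrm{train}}(X_*,Y_*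 )\le q_{\mathrm{train}}\mid (X_i,Y_i)_{i\in I_{\mathrm{train}}}]$. *)

From HB Require Import structures.
From mathcomp Require Import all_boot all_order all_algebra.
From mathcomp Require Import all_classical all_reals all_analysis.
Set Implicit Arguments. Unset Strict Implicit. Unset Printing Implicit Defensive.
Import Order.TTheory GRing.Theory Num.Theory.
Local Open Scope classical_set_scope.
Local Open Scope ring_scope.

Definition indep2 {d d1 d2 : measure_display} {R : realType}
  {Omega : measurableType d} {T1 : measurableType d1} {T2 : measurableType d2}
  (P : probability Omega R) (U : Omega -> T1) (V : Omega -> T2) : Prop :=
  forall (A : set T1) (B : set T2), measurable A -> measurable B ->
    P (U @^-1` A `&` V @^-1` B) = (P (U @^-1` A) * P (V @^-1` B))%E.

Definition sample {d : measure_display} {Omega : measurableType d} {T : Type}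
  (n : nat) (Z : 'I_n -> Omega -> T) (w : Omega) : n.-tuple T :=
  [tuple Z i w | i < n].

Definition train_data {Omega T : Type} (ntrain ntest : nat)
  (Z : 'I_(ntrain + ntest) -> Omega -> T) (w : Omega) : ntrain.-tuple T :=
  [tuple Z (lshift ntest i) w | i < ntrain].

Definition qcal {R : realType} (m : nat) (phi : R) (v : 'I_m -> R) (i : 'I_m) : R :=
  inf [set t : R | phi <= (m.-1)%:R^-1 * \sum_(j < m | j != i) ((v j <= t)%R : bool)%:R].

(* P_{q,train}(w) = P[ s_train(w)(Z_* ) <= q(train(w)) | train ],
   realised (via the independence of Z_* from the sample) as the
   probability over an independent copy w' of Z_* with the training data
   frozen at w. *)
Definition Pq_train {d d' : measure_display} {R : realType}
  {Omega : measurableType d} {T : measurableType d'}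
  (P : probability Omega R) (ntrain ntest : nat)
  (s : ntrain.-tuple T -> T -> R) (q : ntrain.-tuple T -> R)
  (Z : 'I_(ntrain + ntest) -> Omega -> T) (Zstar : Omega -> T) (w : Omega) : R :=
  fine (P [set w' | s (train_data Z w) (Zstar w') <= q (train_data Z w)]).

From HB Require Import structures.
From mathcomp Require Import all_boot all_order all_algebra.
From mathcomp Require Import all_classical all_reals all_analysis.
From mathcomp Require Import measurable_realfun lra.
Set Implicit Arguments. Unset Strict Implicit. Unset Printing Implicit Defensive.
Import Order.TTheory GRing.Theory Num.Theory.
Local Open Scope classical_set_scope.
Local Open Scope ring_scope.

(* Let c = 1 - alpha - eps_test - 1/ntest and let q be the c-quantile of the
   conditional law of the score of a fresh point given the training data; q is
   a measurable function of the training data and P_{q,train} >= c, so the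
   first hypothesis gives P[s(Z_i) <= q] >= c - eps_test(i).  The thresholds
   q - 1/(k+1) have conditional probability below c, so by the second
   hypothesis and continuity from above, with probability at least
   1 - delta a fraction at most c + eps_test = 1 - alpha - 1/ntest of the test
   scores lies strictly below q.  On both events, s(Z_i) <= q leaves fewer than
   (1 - alpha)(ntest - 1) other scores strictly below s(Z_i), which is exactly
   s(Z_i) <= qhat^(i).
   The second claim holds surely: the uncovered point of smallest score has at
   least (1 - alpha)(ntest - 1) strictly smaller scores, all of them covered. *)

Lemma lt_gap (R : realDomainType) (I : finType) (v : I -> R) (a : R) :
  exists2 e, 0 < e & forall j, v j < a -> v j <= a - e.
Proof.
have [j0 vj0a | nolt] := pickP (fun j => v j < a); last first.
  by exists 1 => // j; rewrite nolt.
case: (@arg_maxP _ _ _ j0 (fun j => v j < a) v vj0a) => j vja vmax.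
exists (a - v j) => [|k /vmax]; first by rewrite subr_gt0.
by rewrite opprB addrC subrK.
Qed.

Section rank_one_out_quantile.
Variables (R : realType) (m : nat) (phi : R).
Hypotheses (m_gt1 : (1 < m)%N) (phi_gt0 : 0 < phi) (phi_le1 : phi <= 1).

Definition loo_cdf (v : 'I_m -> R) (i : 'I_m) (t : R) : R :=
  m.-1%:R^-1 * \sum_(j < m | j != i) ((v j <= t)%R : bool)%:R.

Let natr_pred : m.-1%:R = m%:R - 1 :> R.
Proof. by rewrite -subn1 natrB // ltnW. Qed.

Let natr_pred_gt0 : 0 < m.-1%:R :> R.
Proof. by rewrite ltr0n -subn1 subn_gt0. Qed.

Let le_sum_norm (v : 'I_m -> R) j : `|v j| <= \sum_k `|v k|.
Proof. by rewrite (bigD1 j) //= lerDl sumr_ge0. Qed.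

Let loo_cdf_lt_le v i t : t < v i ->
  loo_cdf v i t <= m.-1%:R^-1 * \sum_(j < m | j != i) ((v j < v i)%R : bool)%:R.
Proof.
move=> tvi; rewrite ler_pM2l ?invr_gt0 // ler_sum // => j _.
by case: (v j <= t) /idP => [/le_lt_trans->|].
Qed.

Let loo_cdf_ge_lt v i : exists2 e, 0 < e &
  m.-1%:R^-1 * \sum_(j < m | j != i) ((v j < v i)%R : bool)%:R <= loo_cdf v i (v i - e).
Proof.
have [e e_gt0 gap] := lt_gap v (v i); exists e => //.
rewrite ler_pM2l ?invr_gt0 // ler_sum // => j _.
by case: (v j < v i) /idP => [/gap->|].
Qed.

Let qcal_set_neq0 v i : [set t | phi <= loo_cdf v i t] !=set0.
Proof.
exists (\sum_k `|v k|); rewrite /= /loo_cdf (eq_bigr (fun=> 1)) => [|j _].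
  by rewrite sumr_const cardC1 card_ord mulVf ?gt_eqF.
by rewrite (le_trans (ler_norm _) (le_sum_norm v j)).
Qed.

Let qcal_set_lbound v i : has_lbound [set t | phi <= loo_cdf v i t].
Proof.
exists (- \sum_k `|v k|) => t /=; apply: contraLR; rewrite -!ltNge => tlt.
rewrite /loo_cdf big1 ?mulr0 // => j _; apply/eqP; rewrite pnatr_eq0 eqb0 -ltNge.
rewrite (lt_le_trans tlt) // lerNl (le_trans _ (le_sum_norm v j)) //.
by rewrite -normrN ler_norm.
Qed.

Lemma le_qcal v i :
  (v i <= qcal phi v i) = (\sum_(j < m | j != i) ((v j < v i)%R : bool)%:R < phi * m.-1%:R).
Proof.
rewrite -ltr_pdivrMr // mulrC; apply/idP/idP => [vi_le | lt_phi].
  rewrite ltNge; apply/negP => phi_le.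
  have [e e_gt0 le_cdf] := loo_cdf_ge_lt v i.
  have := ge_inf (qcal_set_lbound v i) (le_trans phi_le le_cdf).
  by move/(le_trans vi_le); lra.
apply: lb_le_inf; first exact: qcal_set_neq0.
move=> t /= phi_le; rewrite leNgt; apply/negP => /loo_cdf_lt_le.
by move/(le_trans phi_le); rewrite leNgt lt_phi.
Qed.

Let natr_gt0 : 0 < m%:R :> R.
Proof. by rewrite ltr0n ltnW. Qed.

Let natr_mulBinv : m%:R * (phi - m%:R^-1) = phi * m%:R - 1.
Proof. by rewrite mulrBr mulfV ?gt_eqF // mulrC. Qed.

Lemma le_qcal_of_count v i q : phi < 1 -> v i <= q ->
  m%:R^-1 * \sum_(j < m) ((v j < q)%R : bool)%:R <= phi - m%:R^-1 ->
  v i <= qcal phi v i.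
Proof.
move=> phi_lt1 vi_le_q; rewrite ler_pdivrMl // natr_mulBinv => count_le.
rewrite le_qcal natr_pred (@le_lt_trans _ _ (phi * m%:R - 1)) //; last first.
  by rewrite mulrBr mulr1; lra.
apply: le_trans count_le.
rewrite [leRHS](bigD1 i) //= -[leLHS]add0r lerD ?ler0n // ler_sum // => j _.
by case: (v j < v i) /idP => [/lt_le_trans->|].
Qed.

Lemma qcal_coverage v :
  phi - m%:R^-1 <= m%:R^-1 * \sum_(i < m) ((v i <= qcal phi v i)%R : bool)%:R.
Proof.
rewrite ler_pdivlMl // natr_mulBinv.
have [i0 bad_i0 | all_good] := pickP (fun i => ~~ (v i <= qcal phi v i)); last first.
  rewrite (eq_bigr (fun=> 1)) => [|i _]; last by have /negbFE-> := all_good i.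
  rewrite sumr_const card_ord.
  have : phi * m%:R <= m%:R by rewrite ler_piMl ?ler0n.
  lra.
case: (@arg_minP _ _ _ i0 (fun i => ~~ (v i <= qcal phi v i)) v bad_i0) => i bad_i vmin.
have good_below j : v j < v i -> v j <= qcal phi v j.
  by move=> vji; apply: contraTT vji => /vmin; rewrite leNgt.
move: bad_i; rewrite le_qcal -leNgt natr_pred => count_ge.
rewrite (@le_trans _ _ (phi * (m%:R - 1))) //; first by rewrite mulrBr mulr1 lerD2l lerN2.
apply: (le_trans count_ge).
rewrite [leRHS](bigD1 i) //= -[leLHS]add0r lerD ?ler0n // ler_sum // => j _.
by case: (v j < v i) /idP => [/good_below->|].
Qed.

End rank_one_out_quantile.

Definition quantile d (T : measurableType d) (R : realType) (P : probability T R)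
  (X : {RV P >-> R}) (c : R) : R := inf [set t | (c%:E <= cdf X t)%E].

Section quantile.
Context d (T : measurableType d) (R : realType) (P : probability T R).
Variables (X : {RV P >-> R}) (c : R).
Hypotheses (c_gt0 : 0 < c) (c_lt1 : c < 1).

Let quantile_set_neq0 : [set t | (c%:E <= cdf X t)%E] !=set0.
Proof.
apply: contrapT => no_t.
have : (1 <= c%:E)%E.
  apply: (cvge_to_le (cvg_cdfy1 X)); apply: nearW => t.
  by rewrite leNgt; apply/negP => /ltW c_le; apply: no_t; exists t.
by rewrite lee_fin leNgt c_lt1.
Qed.

Let quantile_set_lbound : has_lbound [set t | (c%:E <= cdf X t)%E].
Proof.
have [t0 cdf_lt] : exists t, (cdf X t < c%:E)%E.
  apply: contrapT => no_t.
  have : (c%:E <= 0)%E.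
    apply: (cvge_to_ge (cvg_cdfNy0 X)); apply: nearW => t.
    by rewrite leNgt; apply/negP => cdf_lt; apply: no_t; exists t.
  by rewrite lee_fin leNgt c_gt0.
exists t0 => t /= c_le; rewrite leNgt; apply/negP => /ltW /(cdf_nondecreasing X).
by move/(le_trans c_le); rewrite leNgt cdf_lt.
Qed.

Lemma cdf_quantile_ge : (c%:E <= cdf X (quantile X c))%E.
Proof.
apply: (cvge_to_ge (@cdf_right_continuous _ _ _ _ X _)).
apply: filterS (nbhs_right_gt _) => t /(inf_lt quantile_set_neq0) [y c_le y_lt].
exact: le_trans c_le (cdf_nondecreasing X (ltW y_lt)).
Qed.

Lemma quantile_leE t : (quantile X c <= t) = (c%:E <= cdf X t)%E.
Proof.
apply/idP/idP => [q_le | c_le]; last exact: ge_inf quantile_set_lbound _ c_le.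
exact: le_trans cdf_quantile_ge (cdf_nondecreasing X q_le).
Qed.

End quantile.

Section probability_bounds.
Context d (T : measurableType d) (R : realType) (P : probability T R).

Lemma probability_setI_ge (A B : set T) : measurable A -> measurable B ->
  (P A + P B - 1 <= P (A `&` B))%E.
Proof.
move=> mA mB; have mAB := measurableI _ _ mA mB.
rewrite leeBlDr // -leeBlDl ?fin_num_measure //.
rewrite -measureUfinr ?(le_lt_trans (probability_le1 P mB)) ?ltry //.
exact: probability_le1 (measurableU _ _ mA mB).
Qed.

Lemma probability_bigcap_ge (F : (set T)^nat) (p : \bar R) :
  (forall k, measurable (F k)) -> {homo F : n m / (n <= m)%N >-> (m <= n)%O} ->
  (forall k, (p <= P (F k))%E) -> (p <= P (\bigcap_k F k))%E.
Proof.
move=> mF F_noninc p_le; apply: (cvge_to_ge (nonincreasing_cvg_mu _ mF _ F_noninc)).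
- by rewrite (le_lt_trans (probability_le1 P (mF 0%N))) ?ltry.
- exact: bigcapT_measurable.
- exact: nearW.
Qed.

End probability_bounds.

Section random_section.
Context dO dT dU (Omega : measurableType dO) (T : measurableType dT)
  (U : measurableType dU) (R : realType) (P : probability Omega R).
Variables (f : T -> U -> R) (V : Omega -> U).
Hypotheses (mf : measurable_fun setT (fun p : T * U => f p.1 p.2))
  (mV : measurable_fun setT V).

Let measurable_fun_section x : measurable_fun setT (fun w => f x (V w)).
Proof. exact: measurableT_comp mf (measurable_fun_pair (measurable_cst x) mV). Qed.

(* At fixed training data [x], the score of the independent point [V]: its law
   is the conditional law of the score given the training data. *)
Definition random_section (x : T) : {RV P >-> R} :=
  HB.pack (fun w => f x (V w)) (isMeasurableFun.Build _ _ _ _ _ (measurable_fun_section x)).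

Lemma cdf_random_section x t : cdf (random_section x) t = P [set w | f x (V w) <= t].
Proof. by congr (P _); apply/seteqP; split => w /=; rewrite in_itv. Qed.

Lemma measurable_fun_prob_le (g : T -> R) : measurable_fun setT g ->
  measurable_fun setT (fun x => P [set w | f x (V w) <= g x]).
Proof.
move=> mg; pose V' : {RV P >-> U} := HB.pack V (isMeasurableFun.Build _ _ _ _ _ mV).
have mA : measurable [set p : T * U | f p.1 p.2 <= g p.1].
  rewrite -[X in measurable X]setTI; apply: measurable_fun_le => //.
  exact: measurableT_comp mg measurable_fst.
apply: eq_measurable_fun (measurable_fun_xsection (distribution P V') mA) => x _.
by congr (P _); apply/seteqP; split => w /=; rewrite /xsection /= inE.
Qed.

Lemma measurable_fun_quantile (c : R) : 0 < c -> c < 1 ->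
  measurable_fun setT (fun x => quantile (random_section x) c).
Proof.
move=> c_gt0 c_lt1; apply: (measurability _ (RGenOInfty.measurableE R)) => //.
move=> _ [_ [t ->] <-].
rewrite (_ : _ `&` _ = ~` [set x | (c%:E <= P [set w | (f x (V w) <= t)%R])%E]).
  apply/measurableC; rewrite -[X in measurable X]setTI.
  exact/emeasurable_fun_c_infty/(measurable_fun_prob_le (measurable_cst t)).
apply/seteqP; split => x /=; rewrite in_itv /= andbT -cdf_random_section.
  by move=> [_ tq]; rewrite -quantile_leE //; apply/negP; rewrite -ltNge.
by move=> c_nle; split => //; rewrite ltNge quantile_leE //; apply/negP.
Qed.

End random_section.

Section loo_coverage.
Context (R : realType) (d dX dY : measure_display)
  (Omega : measurableType d) (X : measurableType dX) (Y : measurableType dY)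
  (P : probability Omega R) (ntrain ntest : nat)
  (Z : 'I_(ntrain + ntest) -> Omega -> (X * Y)%type) (Zstar : Omega -> (X * Y)%type)
  (s : ntrain.-tuple (X * Y)%type -> (X * Y)%type -> R).
Hypotheses (HZ : forall i, measurable_fun setT (Z i))
  (HZstar : measurable_fun setT Zstar)
  (Hs : measurable_fun setT (fun p : ntrain.-tuple (X * Y)%type * (X * Y)%type => s p.1 p.2)).
Hypothesis ntest_ge2 : (2 <= ntest)%N.
Variables (eps_test delta : R) (eps_i : 'I_ntest -> R).
Hypothesis H1 : forall q : ntrain.-tuple (X * Y)%type -> R, measurable_fun setT q ->
  forall i : 'I_ntest,
    (`| P [set w | (s (train_data Z w) (Z (rshift ntrain i) w) <= q (train_data Z w))%R]
       - \int[P]_w (Pq_train P s q Z Zstar w)%:E | <= (eps_i i)%:E)%E.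
Hypothesis H2 : forall q : ntrain.-tuple (X * Y)%type -> R, measurable_fun setT q ->
  ((1 - delta)%:E <=
   P [set w | (`| ntest%:R^-1 *
                 \sum_(i < ntest)
                    ((s (train_data Z w) (Z (rshift ntrain i) w)
                       <= q (train_data Z w))%R : bool)%:R
               - Pq_train P s q Z Zstar w | <= eps_test)%R])%E.

Local Notation Tn := (ntrain.-tuple (X * Y)%type).
Local Notation score w j := (s (train_data Z w) (Z (rshift ntrain j) w)).

Let ntest_gt0 : 0 < ntest%:R :> R.
Proof. by rewrite ltr0n (leq_trans _ ntest_ge2). Qed.

Lemma measurable_train_data : measurable_fun setT (train_data Z).
Proof.
apply/measurable_fun_tnthP => i.
rewrite (_ : _ \o _ = Z (lshift ntest i)); first exact: HZ.
by apply/funext => w /=; rewrite tnth_mktuple.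
Qed.

Let measurable_score j : measurable_fun setT (fun w => score w j).
Proof. exact: measurableT_comp Hs (measurable_fun_pair measurable_train_data (HZ _)). Qed.

Let measurable_fun_natr (b : Omega -> bool) :
  measurable_fun setT b -> measurable_fun setT (fun w => ((b w)%:R : R)).
Proof.
move=> mb; have := measurable_fun_ifT mb (measurable_cst (1 : R)) (measurable_cst (0 : R)).
by apply: eq_measurable_fun => w _; case: (b w).
Qed.

Let measurable_ltr (f g : Omega -> R) :
  measurable_fun setT f -> measurable_fun setT g -> measurable [set w | f w < g w].
Proof.
move=> mf mg; rewrite (_ : [set w | _] = ~` [set w | g w <= f w]).
  by apply/measurableC; rewrite -[X in measurable X]setTI; exact: measurable_fun_le.
by apply/seteqP; split => w /=; rewrite ltNge => /negP.
Qed.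

Definition emp_cdf (q : Tn -> R) (w : Omega) : R :=
  ntest%:R^-1 * \sum_(j < ntest) ((score w j <= q (train_data Z w))%R : bool)%:R.

Let measurable_emp_cdf q : measurable_fun setT q -> measurable_fun setT (emp_cdf q).
Proof.
move=> mq; apply: measurable_funM; first exact: measurable_cst.
apply: measurable_sum => j; apply/measurable_fun_natr/measurable_fun_ler => //.
exact: measurableT_comp mq measurable_train_data.
Qed.

Let emp_cdf_le (q1 q2 : Tn -> R) w : (forall x, q1 x <= q2 x) ->
  emp_cdf q1 w <= emp_cdf q2 w.
Proof.
move=> q12; rewrite ler_pM2l ?invr_gt0 // ler_sum // => j _.
by case: (score w j <= _) /idP => [/le_trans->|].
Qed.

Let random_score (x : Tn) := random_section P Hs HZstar x.

Lemma Pq_trainE q w :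
  (Pq_train P s q Z Zstar w)%:E = cdf (random_score (train_data Z w)) (q (train_data Z w)).
Proof. by rewrite cdf_random_section fineK // -cdf_random_section fin_num_measure. Qed.

Let measurable_Pq_train q : measurable_fun setT q ->
  measurable_fun setT (Pq_train P s q Z Zstar).
Proof.
move=> mq; apply/measurable_EFinP.
rewrite (_ : _ \o _ = (fun x => P [set w | (s x (Zstar w) <= q x)%R]) \o train_data Z).
  exact: measurableT_comp (measurable_fun_prob_le _ Hs HZstar mq) measurable_train_data.
by apply/funext => w /=; rewrite Pq_trainE cdf_random_section.
Qed.

Let measurable_concentration_event q : measurable_fun setT q ->
  measurable [set w | `|emp_cdf q w - Pq_train P s q Z Zstar w| <= eps_test].
Proof.
move=> mq; rewrite -[X in measurable X]setTI; apply: measurable_fun_le => //.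
apply: measurableT_comp => //.
exact: measurable_funB (measurable_emp_cdf mq) (measurable_Pq_train mq).
Qed.

Section threshold.
Variable c : R.
Hypotheses (c_gt0 : 0 < c) (c_lt1 : c < 1).

Let qc (x : Tn) : R := quantile (random_score x) c.

Let measurable_qc : measurable_fun setT qc.
Proof. exact: measurable_fun_quantile. Qed.

Lemma prob_score_le_quantile i :
  ((c - eps_i i)%:E <= P [set w | (score w i <= qc (train_data Z w))%R])%E.
Proof.
have c_le_int : (c%:E <= \int[P]_w (Pq_train P s qc Z Zstar w)%:E)%E.
  rewrite -[leLHS]mule1 -(probability_setT P) -integral_cst //.
  apply: ge0_le_integral => //.
  - by move=> w _; rewrite lee_fin ltW.
  - exact/measurable_EFinP/measurable_Pq_train.
  - by move=> w _; rewrite Pq_trainE cdf_quantile_ge.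
have := H1 measurable_qc i; move: c_le_int.
rewrite -[P _]fineK ?fin_num_measure //; last first.
  by rewrite -[X in measurable X]setTI; apply: measurable_fun_le => //;
    exact: measurableT_comp measurable_qc measurable_train_data.
case: (\int[P]_w (Pq_train P s qc Z Zstar w)%:E)%E => [r||] //=.
by rewrite !lee_fin ler_norml => ? /andP[? ?]; lra.
Qed.

Lemma emp_lt_quantile_whp : exists2 E : set Omega,
    measurable E /\ ((1 - delta)%:E <= P E)%E &
  forall w, E w ->
    ntest%:R^-1 * \sum_(j < ntest) ((score w j < qc (train_data Z w))%R : bool)%:R
      <= c + eps_test.
Proof.
pose q k x := qc x - k.+1%:R^-1.
have mq k : measurable_fun setT (q k) := measurable_funB measurable_qc (measurable_cst _).
pose F k := [set w | emp_cdf (q k) w <= c + eps_test].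
have mF k : measurable (F k).
  rewrite -[X in measurable X]setTI.
  exact: measurable_fun_le (measurable_emp_cdf (mq k)) (measurable_cst _).
have F_noninc : {homo F : n m / (n <= m)%N >-> (m <= n)%O}.
  move=> n n' le_nn'; apply/subsetPset => w; apply: le_trans; apply: emp_cdf_le => x.
  by rewrite lerD2l lerN2 lef_pV2 ?posrE ?ltr0n // ler_nat.
have PF k : ((1 - delta)%:E <= P (F k))%E.
  apply: le_trans (H2 (mq k)) _; apply: le_measure; rewrite ?inE //.
    exact: measurable_concentration_event.
  move=> w /=; rewrite ler_norml => /andP[_ emp_le].
  have : ((Pq_train P s (q k) Z Zstar w)%:E < c%:E)%E.
    by rewrite Pq_trainE ltNge -quantile_leE // -ltNge ltrBlDr ltrDl invr_gt0 ltr0n.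
  rewrite lte_fin /F /emp_cdf /=; lra.
exists (\bigcap_k F k); first by split; [exact: bigcapT_measurable | exact: probability_bigcap_ge].
move=> w Fw; have [e e_gt0 gap] := lt_gap (fun j => score w j) (qc (train_data Z w)).
have [k] := ltr_add_invr e_gt0; rewrite add0r => k_lt.
apply: le_trans (Fw k I); rewrite ler_pM2l ?invr_gt0 // ler_sum // => j _.
case: (score w j < _) /idP => [/gap le_e|]; last by rewrite ler0n.
by rewrite (le_trans le_e) // lerD2l lerN2 ltW.
Qed.

End threshold.

Let measurable_le_qcal phi i : 0 < phi -> phi <= 1 ->
  measurable [set w | score w i <= qcal phi (fun j => score w j) i].
Proof.
move=> phi_gt0 phi_le1.
rewrite (_ : [set w | _] = [set w |
    \sum_(j < ntest | j != i) ((score w j < score w i)%R : bool)%:R < phi * ntest.-1%:R]).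
  apply: measurable_ltr (measurable_cst _).
  under eq_fun do rewrite big_mkcond /=.
  apply: measurable_sum => j; case: (j != i); last exact: measurable_cst.
  exact/measurable_fun_natr/measurable_fun_ltr.
by apply/seteqP; split => w /=; rewrite le_qcal.
Qed.

Lemma loo_quantile_coverage alpha i :
  0 < alpha -> alpha < 1 -> 0 <= eps_test -> 0 <= eps_i i -> 0 <= delta ->
  ((1 - alpha - eps_i i - eps_test - delta - ntest%:R^-1)%:E <=
   P [set w | (score w i <= qcal (1 - alpha) (fun j => score w j) i)%R])%E.
Proof.
move=> alpha_gt0 alpha_lt1 eps_test_ge0 eps_i_ge0 delta_ge0.
have phi_gt0 : 0 < 1 - alpha by lra.
have phi_le1 : 1 - alpha <= 1 by lra.
have ntest_inv_gt0 : 0 < ntest%:R^-1 :> R by rewrite invr_gt0.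
pose c := 1 - alpha - eps_test - ntest%:R^-1.
have [c_le0 | c_gt0] := lerP c 0.
  by apply: le_trans (measure_ge0 P _); rewrite lee_fin; rewrite /c in c_le0; lra.
have c_lt1 : c < 1 by rewrite /c; lra.
pose A := [set w | score w i <= quantile (random_score (train_data Z w)) c].
have mA : measurable A.
  rewrite -[X in measurable X]setTI; apply: measurable_fun_le => //.
  exact: measurableT_comp (measurable_fun_quantile _ _ _ c_gt0 c_lt1) measurable_train_data.
have [E [mE PE] E_count] := emp_lt_quantile_whp c_gt0 c_lt1.
have A_E_sub : A `&` E `<=` [set w | score w i <= qcal (1 - alpha) (fun j => score w j) i].
  move=> w [Aw /E_count count_le] /=; apply: le_qcal_of_count Aw _ => //; first lra.
  by rewrite (le_trans count_le) // /c; lra.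
apply: le_trans (le_measure P _ _ A_E_sub); rewrite ?inE; last 2 first.
- exact: measurableI.
- exact: measurable_le_qcal.
apply: le_trans (probability_setI_ge P mA mE).
rewrite (_ : _ - _ = c - eps_i i + (1 - delta) - 1) ?EFinB ?EFinD; last by rewrite /c; lra.
by rewrite leeB ?leeD // prob_score_le_quantile.
Qed.

End loo_coverage.

Theorem theorem4p1
  (R : realType) (d dX dY : measure_display)
  (Omega : measurableType d) (X : measurableType dX) (Y : measurableType dY)
  (P : probability Omega R)
  (ntrain ntest : nat) (Htrain : (0 < ntrain)%N) (Htest : (2 <= ntest)%N)
  (Z : 'I_(ntrain + ntest) -> Omega -> (X * Y)%type)
  (Zstar : Omega -> (X * Y)%type)
  (HZ : forall i, measurable_fun setT (Z i))
  (HZstar : measurable_fun setT Zstar)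
  (Hdist : forall i (B : set (X * Y)%type), measurable B ->
     P (Z i @^-1` B) = P (Zstar @^-1` B))
  (Hindep : indep2 P (sample Z) Zstar)
  (s : ntrain.-tuple (X * Y)%type -> (X * Y)%type -> R)
  (Hs : measurable_fun setT (fun p : ntrain.-tuple (X * Y)%type * (X * Y)%type => s p.1 p.2))
  (alpha : R) (Halpha : 0 < alpha < 1)
  (eps_test : R) (Heps : 0 < eps_test < 1)
  (eps_i : 'I_ntest -> R) (Hepsi : forall i, 0 < eps_i i < 1)
  (delta : R) (Hdelta : 0 < delta < 1)
  (H1 : forall q : ntrain.-tuple (X * Y)%type -> R, measurable_fun setT q ->
     forall i : 'I_ntest,
       (`| P [set w | (s (train_data Z w) (Z (rshift ntrain i) w) <= q (train_data Z w))%R]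
          - \int[P]_w (Pq_train P s q Z Zstar w)%:E | <= (eps_i i)%:E)%E)
  (H2 : forall q : ntrain.-tuple (X * Y)%type -> R, measurable_fun setT q ->
     ((1 - delta)%:E <=
      P [set w | (`| ntest%:R^-1 *
                    \sum_(i < ntest)
                       ((s (train_data Z w) (Z (rshift ntrain i) w)
                          <= q (train_data Z w))%R : bool)%:R
                  - Pq_train P s q Z Zstar w | <= eps_test)%R])%E) :
  (forall i : 'I_ntest,
     ((1 - alpha - eps_i i - eps_test - delta - ntest%:R^-1)%:E <=
      P [set w | (s (train_data Z w) (Z (rshift ntrain i) w)
                 <= qcal (1 - alpha)
                      (fun j => s (train_data Z w) (Z (rshift ntrain j) w)) i)%R])%E)
  /\
  ((1 - 2 * delta)%:E <=
   P [set w | (1 - alpha - eps_test - ntest%:R^-1 <=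
              ntest%:R^-1 *
              \sum_(i < ntest)
                 ((s (train_data Z w) (Z (rshift ntrain i) w)
                    <= qcal (1 - alpha)
                         (fun j => s (train_data Z w) (Z (rshift ntrain j) w)) i)%R : bool)%:R)%R])%E.
Proof.
have /andP[alpha_gt0 alpha_lt1] := Halpha.
have /andP[eps_gt0 _] := Heps.
have /andP[delta_gt0 _] := Hdelta.
split=> [i|].
  have /andP[eps_i_gt0 _] := Hepsi i.
  exact: (loo_quantile_coverage HZ HZstar Hs Htest H1 H2 alpha_gt0 alpha_lt1
    (ltW eps_gt0) (ltW eps_i_gt0) (ltW delta_gt0)).
have phi_gt0 : 0 < 1 - alpha by lra.
have phi_le1 : 1 - alpha <= 1 by lra.
rewrite (_ : [set w | _] = setT) ?probability_setT ?lee_fin; first lra.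
apply/seteqP; split => // w _ /=.
by apply: le_trans _ (qcal_coverage Htest phi_gt0 phi_le1 _); lra.
Qed.
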